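(* Let $p$ be an odd prime and let $\alpha,\beta,\gamma\in\mathbb{Z}_p$ with $p\nmid\beta$ and $p\nmid\gamma$, and with $(\alpha,\beta-\gamma)\ne(0,0)$. Let $k\ge0$ be the largest integer such that $p^k\mid\alpha$ and $p^k\mid(\beta-\gamma)$. Let $$f(x)=(x^2+p\alpha x+p\beta)(x^2-p\alpha x+p\gamma).$$ (Case 1) If $p^{k+1}\nmid(\beta-\gamma)$, then every monic quartic $g\in\mathbb{Z}_p[x]$ with $g\equiv f\pmod{p^{2k+4}}$ is reducible in $\mathbb{Z}_p[x]$. (Case 2) If $p^{k+1}\mid(\beta-\gamma)$ and $p^{k+1}\nmid\alpha$, then every monic quartic $g\in\mathbb{Z}_p[x]$ with $g\equiv f\pmod{p^{2k+5}}$ is reducible in $\mathbb{Z}_p[x]$.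
   Context: Congruences of polynomials are coefficientwise. Reducible means it can be written as a product of two nonconstant polynomials in $\mathbb{Z}_p[x]$. *)

(* The ring Z_p of p-adic integers is not in the library:
   we construct it honestly as the inverse limit of the rings Z/p^n Z,
   i.e. sequences (x_n) of integers with x_n = x_{n+1} mod p^n,
   and equip it with its comNzRing structure. *)
From HB Require Import structures.
From mathcomp Require Import all_boot all_order all_algebra.
From mathcomp Require Import boolp.
Set Implicit Arguments. Unset Strict Implicit. Unset Printing Implicit Defensive.
Import Order.TTheory GRing.Theory Num.Theory.
Local Open Scope ring_scope.

Lemma modz_dvd_mod (d d' m : int) : (d %| d')%Z -> ((m %% d')%Z %% d)%Z = (m %% d)%Z.
Proof.
move=> /dvdzP [c ->].
rewrite [in RHS](divz_eq m (c * d)) mulrA modzMDl //.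
Qed.

Section Padic.
Variable p : nat.

(* The modulus: equal to p whenever p >= 2 (in particular for p prime). *)
Definition pmod : nat := (p.-2).+2.
Definition pw (n : nat) : int := (pmod%:Z) ^+ n.

Lemma pw_dvd n : (pw n %| pw n.+1)%Z.
Proof. exact: dvdz_exp2l. Qed.

Lemma pw_gt0 n : 0 < pw n.
Proof. by rewrite exprn_gt0. Qed.

Definition padic_compat (x : nat -> int) := forall n, x n = (x n.+1 %% pw n)%Z.

Record padic := Padic { pseq : nat -> int; pseqP : padic_compat pseq }.

HB.instance Definition _ := gen_eqMixin padic.
HB.instance Definition _ := gen_choiceMixin padic.

Lemma padic_ext (x y : padic) : pseq x =1 pseq y -> x = y.
Proof.
case: x y => [x Hx] [y Hy] /= /funext E; subst y.
by rewrite (Prop_irrelevance Hx Hy).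
Qed.

Lemma pseq_mod (x : padic) n : (pseq x n %% pw n)%Z = pseq x n.
Proof. by rewrite (pseqP x n) modz_mod. Qed.

Lemma compat_red (F : int -> int -> int) (x y : padic) :
  (forall a b d, (F (a %% d)%Z (b %% d)%Z = F a b %[mod d])%Z) ->
  padic_compat (fun n => (F (pseq x n) (pseq y n) %% pw n)%Z).
Proof.
move=> HF n; rewrite modz_dvd_mod ?pw_dvd //.
by rewrite (pseqP x n) (pseqP y n) HF.
Qed.

Definition padic_add_s (x y : padic) n := ((pseq x n + pseq y n) %% pw n)%Z.
Lemma padic_add_compat x y : padic_compat (padic_add_s x y).
Proof. by apply: (compat_red (F := +%R)) => a b d; rewrite modzDm. Qed.
Definition padic_add x y := Padic (padic_add_compat x y).

Definition padic_mul_s (x y : padic) n := ((pseq x n * pseq y n) %% pw n)%Z.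
Lemma padic_mul_compat x y : padic_compat (padic_mul_s x y).
Proof. by apply: (compat_red (F := *%R)) => a b d; rewrite modzMm. Qed.
Definition padic_mul x y := Padic (padic_mul_compat x y).

Definition padic_opp_s (x : padic) n := ((- pseq x n) %% pw n)%Z.
Lemma padic_opp_compat x : padic_compat (padic_opp_s x).
Proof.
apply: (compat_red (F := fun a _ => - a) x x) => a b d.
by rewrite modzNm.
Qed.
Definition padic_opp x := Padic (padic_opp_compat x).

Lemma padic_zero_compat : padic_compat (fun _ => 0).
Proof. by move=> n; rewrite mod0z. Qed.
Definition padic_zero := Padic padic_zero_compat.

Lemma padic_one_compat : padic_compat (fun n => (1 %% pw n)%Z).
Proof. by move=> n; rewrite modz_dvd_mod ?pw_dvd. Qed.
Definition padic_one := Padic padic_one_compat.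

Lemma padic_addA : associative padic_add.
Proof.
move=> x y z; apply: padic_ext => n /=.
by rewrite /padic_add_s /= modzDml modzDmr addrA.
Qed.

Lemma padic_addC : commutative padic_add.
Proof. by move=> x y; apply: padic_ext => n /=; rewrite /padic_add_s addrC. Qed.

Lemma padic_add0 : left_id padic_zero padic_add.
Proof. by move=> x; apply: padic_ext => n /=; rewrite /padic_add_s add0r pseq_mod. Qed.

Lemma padic_addN : left_inverse padic_zero padic_opp padic_add.
Proof.
move=> x; apply: padic_ext => n /=.
by rewrite /padic_add_s /padic_opp_s /= modzDml addNr mod0z.
Qed.

HB.instance Definition _ :=
  GRing.isZmodule.Build padic padic_addA padic_addC padic_add0 padic_addN.

Lemma padic_mulA : associative padic_mul.
Proof.
move=> x y z; apply: padic_ext => n /=.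
by rewrite /padic_mul_s /= modzMml modzMmr mulrA.
Qed.

Lemma padic_mulC : commutative padic_mul.
Proof. by move=> x y; apply: padic_ext => n /=; rewrite /padic_mul_s mulrC. Qed.

Lemma padic_mul1 : left_id padic_one padic_mul.
Proof.
by move=> x; apply: padic_ext => n /=; rewrite /padic_mul_s /= modzMml mul1r pseq_mod.
Qed.

Lemma padic_mulDl : left_distributive padic_mul (@GRing.add padic).
Proof.
move=> x y z; apply: padic_ext => n /=.
rewrite /padic_mul_s /= /padic_add_s /= modzMml modzDm mulrDl //.
Qed.

Lemma padic_one_neq0 : padic_one != 0 :> padic.
Proof.
apply/eqP => /(congr1 (fun x => pseq x 1%N)) /=.
by rewrite /pw expr1 /pmod modz_small.
Qed.

HB.instance Definition _ :=
  GRing.Zmodule_isComNzRing.Build padic padic_mulA padic_mulC padic_mul1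
    padic_mulDl padic_one_neq0.

End Padic.

(* Z_p, the ring of p-adic integers (for p prime; for p < 2 it is Z_2). *)
Notation "''Z_p[' p ]" := (padic p) (format "''Z_p[' p ]").

Definition rdvd (R : comNzRingType) (a b : R) : Prop := exists c : R, b = a * c.

Definition poly_congr (R : comNzRingType) (m : R) (g f : {poly R}) : Prop :=
  forall i : nat, rdvd m (g`_i - f`_i).

Definition reducible (R : comNzRingType) (g : {poly R}) : Prop :=
  exists g1 g2 : {poly R}, (1 < size g1)%N /\ (1 < size g2)%N /\ g = g1 * g2.

(* Hensel lifting of the factorisation of f into its two quadratic factors.  Newton
   iteration on a pair of monic factors (u, v) of g converges in the complete ring Z_p
   as soon as g = u0 v0 modulo p^(2M+1) and the linearisation (eu, ev) |-> eu v0 + u0 ev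
   of the product map reaches, modulo p^(M+1), p^M times every polynomial of degree < 4.
   For the two factors of f this linear system is triangular modulo p^(M+1) and is
   solved explicitly: with M = k + 1 when (beta - gamma) / p^k is a unit, and with
   M = k + 2 when alpha / p^k, beta and 2 are units. *)

From mathcomp Require Import all_boot all_order all_algebra.
From mathcomp Require Import ring zify boolp.
Set Implicit Arguments.
Unset Strict Implicit.
Unset Printing Implicit Defensive.

Import Order.TTheory GRing.Theory.
Local Open Scope ring_scope.

Section RingDivisibility.
Variable R : comNzRingType.
Implicit Types m n a b x y : R.

Lemma rdvd_refl m : rdvd m m.
Proof. by exists 1; rewrite mulr1. Qed.

Lemma rdvd0 m : rdvd m 0.
Proof. by exists 0; rewrite mulr0. Qed.

Lemma rdvdD m a b : rdvd m a -> rdvd m b -> rdvd m (a + b).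
Proof. by case=> c -> [d ->]; exists (c + d); rewrite mulrDr. Qed.

Lemma rdvdN m a : rdvd m a -> rdvd m (- a).
Proof. by case=> c ->; exists (- c); rewrite mulrN. Qed.

Lemma rdvdMl m a b : rdvd m b -> rdvd m (a * b).
Proof. by case=> c ->; exists (a * c); rewrite mulrCA. Qed.

Lemma rdvdMr m a b : rdvd m a -> rdvd m (a * b).
Proof. by rewrite mulrC; apply: rdvdMl. Qed.

Lemma rdvd_mul m n a b : rdvd m a -> rdvd n b -> rdvd (m * n) (a * b).
Proof. by case=> c -> [d ->]; exists (c * d); rewrite mulrACA. Qed.

Lemma rdvd_exp2l x i j a : (i <= j)%N -> rdvd (x ^+ j) a -> rdvd (x ^+ i) a.
Proof. by move=> /subnKC <- [c ->]; exists (x ^+ (j - i) * c); rewrite exprD mulrA. Qed.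

Lemma inv_mod_mul m x x' y y' :
  rdvd m (x * x' - 1) -> rdvd m (y * y' - 1) -> rdvd m (x * y * (x' * y') - 1).
Proof.
move=> hx hy; have -> : x * y * (x' * y') - 1 = (x * x' - 1) * (y * y') + (y * y' - 1).
  by ring.
by apply: rdvdD => //; apply: rdvdMr.
Qed.

Lemma rdvd_polyC m a : rdvd m a -> rdvd m%:P a%:P.
Proof. by case=> c ->; exists c%:P; rewrite polyCM. Qed.

Lemma rdvd_polyC_coef m (h : {poly R}) : rdvd m%:P h -> forall i, rdvd m h`_i.
Proof. by case=> r -> i; exists r`_i; rewrite coefCM. Qed.

Lemma coef_rdvd_polyC m (h : {poly R}) : (forall i, rdvd m h`_i) ->
  exists2 r : {poly R}, h = m%:P * r & (size r <= size h)%N.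
Proof.
move=> /choice [c hc]; exists (\poly_(i < size h) c i); last exact: size_poly.
apply/polyP => i; rewrite coefCM coef_poly; case: ltnP => [_ | hi]; first exact: hc.
by rewrite mulr0 nth_default.
Qed.

Lemma poly_congrE m (g f : {poly R}) : poly_congr m g f -> rdvd m%:P (g - f).
Proof.
move=> hc; have [|r -> _] := @coef_rdvd_polyC m (g - f); last by exists r.
by move=> i; rewrite coefB; apply: hc.
Qed.

End RingDivisibility.

Lemma dependent_choice T (P : nat -> T -> Prop) (Q : nat -> T -> T -> Prop) x0 :
  P 0%N x0 -> (forall n x, P n x -> exists y, P n.+1 y /\ Q n x y) ->
  exists xs : nat -> T, forall n, P n (xs n) /\ Q n (xs n) (xs n.+1).
Proof.
move=> P0 step.
have [f hf] : {f : nat * T -> T & forall nx, P nx.1 nx.2 ->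
    P nx.1.+1 (f nx) /\ Q nx.1 nx.2 (f nx)}.
  apply: (@choice _ _ (fun nx y => P nx.1 nx.2 -> P nx.1.+1 y /\ Q nx.1 nx.2 y)).
  move=> [n x] /=; have [/step [y hy] | nPx] := pselect (P n x).
    by exists y.
  by exists x => Pnx; case: nPx.
pose fix xs n := if n is n'.+1 then f (n', xs n') else x0.
have Pxs n : P n (xs n) by elim: n => //= n /(hf (n, xs n)) [].
by exists xs => n; split; [apply: Pxs | exact: (proj2 (hf (n, xs n) (Pxs n)))].
Qed.

Section PadicIntegers.
Variable p : nat.
Hypothesis p_gt1 : (1 < p)%N.
Local Notation R := 'Z_p[p].
Local Notation q := (p%:R : R).

Lemma pwE n : pw p n = p%:Z ^+ n.
Proof. by rewrite /pw /pmod; case: p p_gt1 => [|[|]]. Qed.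

Lemma pw_neq0 n : pw p n != 0.
Proof. by rewrite gt_eqF ?pw_gt0. Qed.

Lemma pseqD (x y : R) n : pseq (x + y) n = ((pseq x n + pseq y n) %% pw p n)%Z.
Proof. by []. Qed.

Lemma pseqN (x : R) n : pseq (- x) n = ((- pseq x n) %% pw p n)%Z.
Proof. by []. Qed.

Lemma pseqM (x y : R) n : pseq (x * y) n = ((pseq x n * pseq y n) %% pw p n)%Z.
Proof. by []. Qed.

Lemma pseq_nat m n : pseq (m%:R : R) n = (m%:Z %% pw p n)%Z.
Proof.
elim: m => [|m IH]; first by rewrite mod0z.
by rewrite mulrS pseqD IH /= modzDml modzDmr -add1n PoszD.
Qed.

Lemma pseq_modD (y : R) n j : (pseq y (n + j) %% pw p n)%Z = pseq y n.
Proof.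
elim: j => [|j IH]; first by rewrite addn0 pseq_mod.
by rewrite -IH (pseqP y (n + j)) addnS modz_dvd_mod // /pw exprD dvdz_mulr.
Qed.

Lemma rdvd_qpowP (y : R) N : rdvd (q ^+ N) y <-> pseq y N = 0.
Proof.
split=> [[c ->] | y0].
  by rewrite pseqM -natrX pseq_nat pwE -natz natrX natz modzMml modzMr.
have [z hz] : exists z : nat -> int, forall n, pseq y (n + N) = z n * pw p N.
  exists (fun n => (pseq y (n + N) %/ pw p N)%Z) => n.
  by rewrite divzK //; apply/dvdz_mod0P; rewrite addnC pseq_modD.
have zP : padic_compat p (fun n => (z n %% pw p n)%Z).
  move=> n; rewrite modz_dvd_mod ?pw_dvd //.
  apply: (mulIf (pw_neq0 N)); rewrite !(mulz_modl (pw_gt0 p N)) -!hz /pw -exprD.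
  by rewrite pseq_mod addSn -(pseqP y).
exists (Padic zP); apply: padic_ext => n; rewrite pseqM /= modzMmr.
by rewrite -natrX pseq_nat -natz natrX natz modzMml -pwE mulrC -hz pseq_modD.
Qed.

Lemma pseq_eqP (x y : R) n : pseq x n = pseq y n <-> rdvd (q ^+ n) (x - y).
Proof.
rewrite rdvd_qpowP; split=> [e | d0].
  by rewrite pseqD pseqN e modzDmr subrr mod0z.
by rewrite -[x](subrK y) pseqD d0 add0r pseq_mod.
Qed.

Lemma padic_eq0 (y : R) : (forall N, rdvd (q ^+ N) y) -> y = 0.
Proof. by move=> hy; apply: padic_ext => n; apply/rdvd_qpowP. Qed.

Lemma padic_cauchy (xs : nat -> R) : (forall n, rdvd (q ^+ n) (xs n.+1 - xs n)) ->
  exists x, forall n, rdvd (q ^+ n) (x - xs n).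
Proof.
move=> hc; have xP : padic_compat p (fun n => pseq (xs n) n).
  by move=> n; rewrite -(pseqP (xs n.+1)); apply/esym/pseq_eqP.
by exists (Padic xP) => n; apply/pseq_eqP.
Qed.

Lemma padic_ndvd1 : ~ rdvd q 1.
Proof. by rewrite -[q]expr1 rdvd_qpowP /= pwE expr1 modz_small. Qed.

Lemma padic_inv_mod (u : R) : prime p -> ~ rdvd q u -> exists w, rdvd q (u * w - 1).
Proof.
move=> pr nu; pose n := `|pseq u 1|%N.
have un : rdvd q (u - n%:R).
  rewrite -[q]expr1 -pseq_eqP pseq_nat /n gez0_abs ?pseq_mod //.
  by rewrite -pseq_mod modz_ge0 ?pw_neq0.
have n_lt : (n < p)%N.
  rewrite -ltz_nat /n gez0_abs -pseq_mod ?modz_ge0 ?pw_neq0 //.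
  by rewrite pwE expr1 ltz_pmod // ltz_nat prime_gt0.
have n_gt0 : (0 < n)%N.
  rewrite lt0n; apply/negP => /eqP n0; apply: nu.
  by rewrite -[q]expr1 rdvd_qpowP; apply/eqP; rewrite -absz_eq0 -/n n0.
have [a _ /dvdnP [c hc]] := Bezoutl n (prime_gt0 pr).
move: hc; rewrite (eqP (_ : coprime p n)); last first.
  by rewrite prime_coprime //; apply/negP => /(dvdn_leq n_gt0); rewrite leqNgt n_lt.
move=> hc; exists (- a%:R); rewrite -[u](subrK n%:R).
have -> : (u - n%:R + n%:R) * - a%:R - 1 = - ((u - n%:R) * a%:R + (1 + a * n)%:R).
  by rewrite natrD natrM; ring.
by apply/rdvdN/rdvdD; [apply: rdvdMr | rewrite hc natrM; apply: rdvdMl; apply: rdvd_refl].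
Qed.

Local Notation Q := (p%:R : {poly R}).

Lemma QpowE n : Q ^+ n = (q ^+ n)%:P.
Proof. by rewrite polyC_exp polyC_natr. Qed.

Lemma padic_poly_eq0 (h : {poly R}) : (forall N, rdvd (Q ^+ N) h) -> h = 0.
Proof.
move=> hN; apply/polyP => i; rewrite coef0; apply: padic_eq0 => N.
by apply: rdvd_polyC_coef; rewrite -QpowE.
Qed.

Lemma padic_poly_cauchy d (us : nat -> {poly R}) :
  (forall n, (size (us n) <= d)%N) -> (forall n, rdvd (Q ^+ n) (us n.+1 - us n)) ->
  exists u, forall n, rdvd (Q ^+ n) (u - us n).
Proof.
move=> hs hc.
have [x hx] : {x : nat -> R & forall i n, rdvd (q ^+ n) (x i - (us n)`_i)}.
  apply: (@choice _ _ (fun i xi => forall n, rdvd (q ^+ n) (xi - (us n)`_i))) => i.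
  apply: padic_cauchy => n; rewrite -coefB; apply: rdvd_polyC_coef.
  by rewrite -QpowE.
exists (\poly_(i < d) x i) => n; rewrite QpowE.
have [i | r -> _] := @coef_rdvd_polyC _ (q ^+ n) (\poly_(i < d) x i - us n); last by exists r.
rewrite coefB coef_poly; case: ltnP => [_ | hi]; first exact: hx.
by rewrite (nth_default 0 (leq_trans (hs n) hi)) subr0; apply: rdvd0.
Qed.

Lemma size_monic_congr (u0 u : {poly R}) : u0 \is monic -> rdvd Q (u - u0) ->
  (size u0 <= size u)%N.
Proof.
move=> /monicP lu0; rewrite -polyC_natr => /rdvd_polyC_coef/(_ (size u0).-1).
rewrite coefB -lead_coefE lu0 leqNgt => h1; apply/negP => hlt; apply: padic_ndvd1.
move: h1; rewrite nth_default ?sub0r => [/rdvdN | ]; first by rewrite opprK.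
by rewrite -ltnS (ltn_predK hlt).
Qed.

End PadicIntegers.

Section MonicPerturbation.
Variable R : nzRingType.
Implicit Types a b : {poly R}.

Lemma monic_perturb (u0 u : {poly R}) : u0 \is monic -> (size (u - u0)%R < size u0)%N ->
  u \is monic /\ size u = size u0.
Proof.
move=> /monicP lu0 hs; rewrite -[u](subrK u0) addrC.
by rewrite monicE lead_coefDl // size_polyDl // lu0.
Qed.

Lemma size_monicB a b : a \is monic -> b \is monic -> size a = size b ->
  (size (a - b)%R < size a)%N.
Proof.
move=> /monicP la /monicP lb sab; have a_gt0 : (0 < size a)%N.
  by rewrite size_poly_gt0 -lead_coef_eq0 la oner_neq0.
rewrite -(ltn_predK a_gt0) ltnS; apply/leq_sizeP => j; rewrite leq_eqVlt coefB.
case/orP=> [/eqP <- | hj]; first by rewrite -lead_coefE la sab -lead_coefE lb subrr.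
by rewrite !nth_default ?subrr // -?sab -(ltn_predK a_gt0).
Qed.

Lemma size_mul_monicB (u v g : {poly R}) : u \is monic -> v \is monic -> g \is monic ->
  size g = (size u + size v).-1 -> (size (u * v - g)%R < size g)%N.
Proof.
move=> mu mv mg sg; have size_uv : size (u * v) = size g.
  by rewrite size_monicM ?monic_neq0.
by rewrite -[X in (_ < X)%N]size_uv size_monicB ?monicMl.
Qed.

End MonicPerturbation.

Section HenselLifting.
Variable p : nat.
Hypothesis p_gt1 : (1 < p)%N.
Local Notation R := 'Z_p[p].
Local Notation Q := (p%:R : {poly R}).

Variables (g u0 v0 : {poly R}) (M : nat).
Hypotheses (u0_monic : u0 \is monic) (v0_monic : v0 \is monic) (g_monic : g \is monic).
Hypothesis size_g : size g = (size u0 + size v0).-1.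
Hypothesis lin_solvable : forall s : {poly R}, (size s < size g)%N -> exists eu ev : {poly R},
  [/\ (size eu < size u0)%N, (size ev < size v0)%N &
      rdvd (Q ^+ M.+1) (eu * v0 + u0 * ev - Q ^+ M * s)].
Hypothesis approx : rdvd (Q ^+ (2 * M + 1)) (u0 * v0 - g).

Definition lift_inv n (uv : {poly R} * {poly R}) : Prop :=
  [/\ (size (uv.1 - u0)%R < size u0)%N, (size (uv.2 - v0)%R < size v0)%N,
      rdvd (Q ^+ M.+1) (uv.1 - u0), rdvd (Q ^+ M.+1) (uv.2 - v0) &
      rdvd (Q ^+ (2 * M + 1 + n)) (uv.1 * uv.2 - g)].

Lemma lift_step n uv : lift_inv n uv -> exists uv', lift_inv n.+1 uv' /\
  rdvd (Q ^+ n) (uv'.1 - uv.1) /\ rdvd (Q ^+ n) (uv'.2 - uv.2).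
Proof.
case: uv => u v [/= su sv du dv err].
have [u_monic size_u] := monic_perturb u0_monic su.
have [v_monic size_v] := monic_perturb v0_monic sv.
have size_err : (size (u * v - g)%R < size g)%N.
  by rewrite size_mul_monicB // size_u size_v.
set N := (2 * M + 1 + n)%N; move: err; rewrite QpowE => /rdvd_polyC_coef/coef_rdvd_polyC.
case=> r hr size_r; rewrite -QpowE in hr.
have [eu [ev [seu sev lin]]] : exists eu ev : {poly R}, [/\ (size eu < size u0)%N,
    (size ev < size v0)%N & rdvd (Q ^+ M.+1) (eu * v0 + u0 * ev - Q ^+ M * - r)].
  by apply: lin_solvable; rewrite size_polyN (leq_ltn_trans size_r size_err).
set A := (n + M.+1)%N; set P := Q ^+ A.
have hg : g = u * v - P * Q ^+ M * r.
  by rewrite -exprD (_ : A + M = N)%N; [rewrite -hr; ring | rewrite /A /N; lia].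
have dvd_next X : rdvd (Q ^+ M.+1) X -> rdvd (Q ^+ (2 * M + 1 + n.+1)) (P * X).
  move=> hX; rewrite (_ : 2 * M + 1 + n.+1 = A + M.+1)%N; last by lia.
  by rewrite exprD; apply: rdvd_mul hX; apply: rdvd_refl.
have dvdP k X : (k <= A)%N -> rdvd (Q ^+ k) (P * X).
  by move=> kA; apply: rdvd_exp2l kA _; apply: rdvdMr; apply: rdvd_refl.
have size_corr (e : {poly R}) : (size (P * e)%R <= size e)%N.
  by rewrite /P QpowE mul_polyC size_scale_leq.
have size_step (w w0 e : {poly R}) : (size (w - w0)%R < size w0)%N ->
    (size e < size w0)%N -> (size (w + P * e - w0)%R < size w0)%N.
  move=> sw se; rewrite addrAC (leq_ltn_trans (size_polyD _ _)) // gtn_max sw.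
  exact: leq_ltn_trans (size_corr e) se.
exists (u + P * eu, v + P * ev); split; last first.
  by rewrite /= !(addrAC _ _ (- _)) !subrr !add0r; split; apply: dvdP; lia.
split=> /=; [exact: size_step | exact: size_step | | | ].
- by rewrite addrAC; apply: rdvdD du (dvdP _ _ _); lia.
- by rewrite addrAC; apply: rdvdD dv (dvdP _ _ _); lia.
(* The correction cancels the error to first order; what is left is quadratic in P. *)
have -> : (u + P * eu) * (v + P * ev) - g = P * (eu * v0 + u0 * ev - Q ^+ M * - r)
    + P * (eu * (v - v0) + (u - u0) * ev) + P * (P * (eu * ev)).
  by rewrite hg; ring.
apply: rdvdD; [apply: rdvdD; apply: dvd_next | ].
- exact: lin.
- by apply: rdvdD; [apply: rdvdMl | apply: rdvdMr].
rewrite mulrA -exprD; apply: (@rdvd_exp2l _ _ _ (A + A)); first lia.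
by apply: rdvdMr; apply: rdvd_refl.
Qed.

Theorem hensel_lift : exists u v : {poly R},
  [/\ g = u * v, rdvd (Q ^+ M.+1) (u - u0) & rdvd (Q ^+ M.+1) (v - v0)].
Proof.
have inv0 : lift_inv 0 (u0, v0).
  split; rewrite /= ?subrr ?size_poly0 ?size_poly_gt0 ?monic_neq0 ?addn0 //; exact: rdvd0.
have [uvs huvs] := dependent_choice inv0 lift_step.
have size_uvs n : size (uvs n).1 = size u0 /\ size (uvs n).2 = size v0.
  have [[su sv _ _ _] _] := huvs n.
  by split; [exact: (monic_perturb u0_monic su).2 | exact: (monic_perturb v0_monic sv).2].
have [u hu] := @padic_poly_cauchy _ p_gt1 (size u0) (fun n => (uvs n).1)
  (fun n => eq_leq (size_uvs n).1) (fun n => (huvs n).2.1).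
have [v hv] := @padic_poly_cauchy _ p_gt1 (size v0) (fun n => (uvs n).2)
  (fun n => eq_leq (size_uvs n).2) (fun n => (huvs n).2.2).
exists u, v; split.
- apply/eqP; rewrite eq_sym -subr_eq0; apply/eqP/(padic_poly_eq0 p_gt1) => N.
  have [[_ _ _ _ err] _] := huvs N.
  have -> : u * v - g = ((uvs N).1 * (uvs N).2 - g) + (u - (uvs N).1) * v
      + (uvs N).1 * (v - (uvs N).2) by ring.
  apply: rdvdD; [apply: rdvdD; [apply: rdvd_exp2l err; lia | exact: rdvdMr] | exact: rdvdMl].
- have [[_ _ du _ _] _] := huvs M.+1.
  by rewrite -(subrK (uvs M.+1).1 u) -addrA; apply: rdvdD.
- have [[_ _ _ dv _] _] := huvs M.+1.
  by rewrite -(subrK (uvs M.+1).2 v) -addrA; apply: rdvdD.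
Qed.

End HenselLifting.

Section QuadraticFactors.
Variable R : comNzRingType.

Definition quad (a b : R) : {poly R} := 'X^2 + a%:P * 'X + b%:P.

Lemma size_linear (a b : R) : (size (a%:P * 'X + b%:P)%R <= 2)%N.
Proof.
rewrite (leq_trans (size_polyD _ _)) // geq_max (leq_trans (size_polyC_leq1 _)) // andbT.
by rewrite mul_polyC (leq_trans (size_scale_leq _ _)) ?size_polyX.
Qed.

Lemma quad_monic_size (a b : R) : quad a b \is monic /\ size (quad a b) = 3.
Proof.
have lt3 : (size (a%:P * 'X + b%:P)%R < size ('X^2 : {poly R}))%N.
  by rewrite size_polyXn ltnS size_linear.
by rewrite /quad -addrA monicE lead_coefDl // size_polyDl // lead_coefXn size_polyXn.
Qed.

(* The coefficients of X^3, ..., X^0 of eu * quad c0 d0 + quad a0 b0 * ev, for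
   eu = ea X + eb and ev = ec X + ed, must reach t * s modulo m. *)
Definition quad_lin_solvable (m t a0 b0 c0 d0 : R) : Prop :=
  forall s3 s2 s1 s0 : R, exists ea eb ec ed : R,
  [/\ rdvd m (ea + ec - t * s3),
      rdvd m (eb + ed + c0 * ea + a0 * ec - t * s2),
      rdvd m (d0 * ea + c0 * eb + b0 * ec + a0 * ed - t * s1) &
      rdvd m (d0 * eb + b0 * ed - t * s0)].

Lemma quad_lin_solvable_poly m t a0 b0 c0 d0 :
  quad_lin_solvable m t a0 b0 c0 d0 -> forall s : {poly R}, (size s <= 4)%N ->
  exists eu ev : {poly R}, [/\ (size eu <= 2)%N, (size ev <= 2)%N &
    rdvd m%:P (eu * quad c0 d0 + quad a0 b0 * ev - t%:P * s)].
Proof.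
move=> hlin s size_s.
have -> : s = (s`_3)%:P * 'X^3 + (s`_2)%:P * 'X^2 + (s`_1)%:P * 'X + (s`_0)%:P.
  apply/polyP => i; rewrite !coefD !coefCM !coefXn coefX coefC.
  case: i => [|[|[|[|i]]]] /=; rewrite ?mulr0 ?mulr1 ?add0r ?addr0 //.
  by rewrite nth_default // (leq_trans size_s).
have [ea [eb [ec [ed [h3 h2 h1 h0]]]]] := hlin s`_3 s`_2 s`_1 s`_0.
exists (ea%:P * 'X + eb%:P), (ec%:P * 'X + ed%:P); split; try exact: size_linear.
pose e3 := ea + ec - t * s`_3; pose e2 := eb + ed + c0 * ea + a0 * ec - t * s`_2.
pose e1 := d0 * ea + c0 * eb + b0 * ec + a0 * ed - t * s`_1.
pose e0 := d0 * eb + b0 * ed - t * s`_0.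
have -> : (ea%:P * 'X + eb%:P) * ('X^2 + c0%:P * 'X + d0%:P)
    + ('X^2 + a0%:P * 'X + b0%:P) * (ec%:P * 'X + ed%:P)
    - t%:P * ((s`_3)%:P * 'X^3 + (s`_2)%:P * 'X^2 + (s`_1)%:P * 'X + (s`_0)%:P)
    = e3%:P * 'X^3 + e2%:P * 'X^2 + e1%:P * 'X + e0%:P.
  by rewrite /e3 /e2 /e1 /e0 !(polyCD, polyCM, polyCN); ring.
by do 3?apply: rdvdD; do ?apply: rdvdMr; apply: rdvd_polyC.
Qed.

End QuadraticFactors.

Section ExplicitSolutions.
Variables (R : comNzRingType) (q : R).

(* The system is triangular modulo q^(k+2): the X^0 and X^1 equations give eb and ea
   through the inverse w of de, then the X^3 and X^2 equations give ec and ed. *)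
Lemma quad_lin_solvable_case1 k (al be de w : R) : rdvd q (de * w - 1) ->
  quad_lin_solvable (q ^+ k.+2) (q ^+ k.+1) (q ^+ k.+1 * al) (q * be)
    (- (q ^+ k.+1 * al)) (q * be - q ^+ k.+1 * de).
Proof.
case=> t /eqP; rewrite subr_eq => /eqP hw s3 s2 s1 s0.
rewrite !exprS; set K := q ^+ k.
pose eb := - (w * s0); pose ea := - (w * (s1 + 2 * al * eb)).
pose T := q * K * (s2 - q * K * al * s3) + 2 * q * K * al * ea.
exists ea, eb, (q * K * s3 - ea), (T - eb); split.
- by exists 0; ring.
- by exists 0; rewrite /T; ring.
- exists (t * (s1 + 2 * al * eb) + be * s3 + K * al * (s2 - q * K * al * s3)
    + 2 * K * al * al * ea).
  by rewrite /T /ea /eb; ring: hw.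
- exists (t * s0 + be * (s2 - q * K * al * s3) + 2 * be * al * ea).
  by rewrite /T /ea /eb; ring: hw.
Qed.

(* Here d0 = b0 modulo q^(k+2), so the X^0 equation is solved through the inverse of
   2 al be and the X^1 equation through that of 2 al. *)
Lemma quad_lin_solvable_case2 k (al be de w v : R) :
  rdvd q (2 * al * w - 1) -> rdvd q (be * v - 1) ->
  quad_lin_solvable (q ^+ k.+3) (q ^+ k.+2) (q ^+ k.+1 * al) (q * be)
    (- (q ^+ k.+1 * al)) (q * be - q ^+ k.+2 * de).
Proof.
move=> hw hv; have [t ht] := hw; have [t' ht'] := inv_mod_mul hw hv.
move=> s3 s2 s1 s0; rewrite !exprS; set K := q ^+ k.
pose ea := w * v * s0; pose X := s1 - (2 * K * al * al - de) * ea.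
pose eb := - (q * (w * X)).
pose T := q * (q * K) * (s2 - q * K * al * s3) + 2 * q * K * al * ea.
exists ea, eb, (q * (q * K) * s3 - ea), (T - eb); split.
- by exists 0; ring.
- by exists 0; rewrite /T /eb /X; ring.
- rewrite (_ : _ - q * (q * K) * s1 = q * (q * K) * (2 * al * w - 1) * X
      + q * (q * (q * K)) * (be * s3 + K * al * (s2 - q * K * al * s3))).
    by rewrite ht; exists (t * X + be * s3 + K * al * (s2 - q * K * al * s3)); ring.
  by rewrite /T /eb /X /ea; ring.
- rewrite (_ : _ - q * (q * K) * s0 = q * (q * K) * (2 * al * be * (w * v) - 1) * s0
      + q * (q * (q * K)) * (de * w * X + be * (s2 - q * K * al * s3))).
    by rewrite ht'; exists (t' * s0 + de * w * X + be * (s2 - q * K * al * s3)); ring.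
  by rewrite /T /eb /X /ea; ring.
Qed.

End ExplicitSolutions.

Lemma quad_lift_reducible p (g : {poly 'Z_p[p]}) M N (a0 b0 c0 d0 : 'Z_p[p]) :
  (1 < p)%N -> g \is monic -> size g = 5%N -> (2 * M + 1 <= N)%N ->
  quad_lin_solvable ((p%:R : 'Z_p[p]) ^+ M.+1) (p%:R ^+ M) a0 b0 c0 d0 ->
  poly_congr ((p%:R : 'Z_p[p]) ^+ N) g (quad a0 b0 * quad c0 d0) -> reducible g.
Proof.
move=> p_gt1 g_monic size_g MN hlin hcongr.
have [mu su] := quad_monic_size a0 b0; have [mv sv] := quad_monic_size c0 d0.
have [|s size_s||u [v [-> du dv]]] := @hensel_lift p p_gt1 g _ _ M mu mv g_monic _ _ _.
- by rewrite su sv size_g.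
- rewrite !QpowE; have [|eu [ev [seu sev he]]] := quad_lin_solvable_poly hlin (s := s).
    by rewrite -ltnS -size_g.
  by exists eu, ev; rewrite su sv.
- move: (poly_congrE hcongr); rewrite -QpowE => /rdvdN; rewrite opprB.
  exact: rdvd_exp2l.
have size_factor w w0 : w0 \is monic -> size w0 = 3%N ->
    rdvd ((p%:R : {poly 'Z_p[p]}) ^+ M.+1) (w - w0) -> (1 < size w)%N.
  move=> w0_monic size_w0 /(rdvd_exp2l (isT : (1 <= M.+1)%N)); rewrite expr1.
  by move/(size_monic_congr p_gt1 w0_monic); rewrite size_w0; apply: leq_trans.
by exists u, v; split; [apply: size_factor du | split; [apply: size_factor dv | ]].
Qed.

Theorem claim3 (p : nat) (alpha beta gamma : 'Z_p[p]) (k : nat) :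
  prime p -> odd p ->
  ~ rdvd (p%:R : 'Z_p[p]) beta -> ~ rdvd (p%:R : 'Z_p[p]) gamma ->
  (alpha, beta - gamma) <> (0, 0) ->
  rdvd ((p%:R : 'Z_p[p]) ^+ k) alpha ->
  rdvd ((p%:R : 'Z_p[p]) ^+ k) (beta - gamma) ->
  ~ (rdvd ((p%:R : 'Z_p[p]) ^+ k.+1) alpha /\
     rdvd ((p%:R : 'Z_p[p]) ^+ k.+1) (beta - gamma)) ->
  let f : {poly 'Z_p[p]} :=
    ('X^2 + (p%:R * alpha)%:P * 'X + (p%:R * beta)%:P) *
    ('X^2 - (p%:R * alpha)%:P * 'X + (p%:R * gamma)%:P) in
  (~ rdvd ((p%:R : 'Z_p[p]) ^+ k.+1) (beta - gamma) ->
   forall g : {poly 'Z_p[p]}, g \is monic -> size g = 5%N ->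
     poly_congr ((p%:R : 'Z_p[p]) ^+ (2 * k + 4)) g f -> reducible g) /\
  (rdvd ((p%:R : 'Z_p[p]) ^+ k.+1) (beta - gamma) ->
   ~ rdvd ((p%:R : 'Z_p[p]) ^+ k.+1) alpha ->
   forall g : {poly 'Z_p[p]}, g \is monic -> size g = 5%N ->
     poly_congr ((p%:R : 'Z_p[p]) ^+ (2 * k + 5)) g f -> reducible g).
Proof.
move=> p_prime p_odd nb _ _ [al ha] [de hd] _ f; have p_gt1 := prime_gt1 p_prime.
set q := (p%:R : 'Z_p[p]).
have ndvd_cofactor x : ~ rdvd (q ^+ k.+1) (q ^+ k * x) -> ~ rdvd q x.
  by move=> nx [c hc]; apply: nx; exists c; rewrite hc exprS; ring.
have hf : f = quad (q ^+ k.+1 * al) (q * beta) * quad (- (q ^+ k.+1 * al)) (q * gamma).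
  by rewrite /f /quad ha [q ^+ k.+1]exprS mulrA polyCN mulNr.
split=> [nd g g_monic size_g hc | [t ht] nal g g_monic size_g hc].
- have [w hw] : exists w, rdvd q (de * w - 1).
    by apply: (padic_inv_mod p_gt1 p_prime); apply: ndvd_cofactor; rewrite -hd.
  have hgam : q * gamma = q * beta - q ^+ k.+1 * de by rewrite exprS -mulrA -hd; ring.
  apply: (quad_lift_reducible (M := k.+1) (N := 2 * k + 4) p_gt1 g_monic size_g _
    (quad_lin_solvable_case1 k al beta hw)); first lia.
  by rewrite -hgam -hf.
- have [wa hwa] : exists wa, rdvd q (al * wa - 1).
    by apply: (padic_inv_mod p_gt1 p_prime); apply: ndvd_cofactor; rewrite -ha.
  have [wb hwb] := padic_inv_mod p_gt1 p_prime nb.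
  have h2 : rdvd q (2 * ((p.+1)./2)%:R - 1).
    rewrite -natrM mul2n halfK /= p_odd subn0 -addn1 natrD addrK; exact: rdvd_refl.
  have hgam : q * gamma = q * beta - q ^+ k.+2 * t by rewrite exprS -mulrA -ht; ring.
  apply: (quad_lift_reducible (M := k.+2) (N := 2 * k + 5) p_gt1 g_monic size_g _
    (quad_lin_solvable_case2 k t (inv_mod_mul h2 hwa) hwb)); first lia.
  by rewrite -hgam -hf.
Qed.
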